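(* Let $F = \{f_1,\dots,f_N\}$ with $f_i(z) = a_i z + b_i$, $a_i,b_i\in\mathbb{Z}$ and $a_i > 0$ for all $i$. Let $z \in \mathbb{N}$, let $\alpha, \beta$ be reduced regular expressions, and let $\ell$ be a finite (possibly empty) sequence of literals. Then: (1) $I'(z, \ell \alpha^* \beta) \iff V(z, \ell) \land \big(I'(z, \ell \beta) \lor I'(P_\ell(z), \alpha)\big)$; (2) $I'(z, \ell \alpha^* ) \iff V(z, \ell) \land \big(I'(z, \ell) \lor I'(P_\ell(z), \alpha)\big)$; (3) $I'(z, \alpha^* \beta) \iff I'(z, \alpha) \lor I'(z, \beta)$; (4) $I'(z, \alpha^* ) \iff I'(z,\alpha)$.
   Context: Regular expressions are over the alphabet $\{1,\dots,N\}$ (literals), built with concatenation, union, Kleene star, $\epsilon$ and $\emptyset$; $L(E)$ is the language of $E$. For a word $s = e_1 \cdots e_K$ put $P_s = f_{e_K} \circ \dots \circ f_{e_1}$ (with $P_\epsilon$ the identity), viewed as the composition $(f_{e_1},\dots,f_{e_K})$; its orbit at $z$ is $\{z, f_{e_1}(z), (f_{e_2}\circ f_{e_1})(z),\dots,P_s(z)\}$. A regular expression is reduced if it contains no $\emptyset$ symbol and no union operation. $V(z,s)$ is the statement that every element of the orbit of $P_s$ at $z$ is nonnegative (i.e. $P_s$ is valid with respect to $z$). For $z\in\mathbb{N}$ and reduced $E$, $I'(z,E)$ is the statement: there exists $s \in L(E)$ with $V(z,s)$ and $P_s(z) > z$. *)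

From Stdlib Require Import ZArith List.
Import ListNotations.
Open Scope Z_scope.

(* Regular expressions over literals (natural numbers; the alphabet {1..N}
   is enforced by the predicate [lits_in]). *)
Inductive regex : Type :=
| Eps : regex
| Empty : regex
| Lit : nat -> regex
| Cat : regex -> regex -> regex
| Union : regex -> regex -> regex
| Star : regex -> regex.

Inductive in_lang : regex -> list nat -> Prop :=
| in_eps : in_lang Eps []
| in_lit : forall x, in_lang (Lit x) [x]
| in_cat : forall E1 E2 s1 s2, in_lang E1 s1 -> in_lang E2 s2 -> in_lang (Cat E1 E2) (s1 ++ s2)
| in_union_l : forall E1 E2 s, in_lang E1 s -> in_lang (Union E1 E2) s
| in_union_r : forall E1 E2 s, in_lang E2 s -> in_lang (Union E1 E2) s
| in_star_nil : forall E, in_lang (Star E) []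
| in_star_cons : forall E s1 s2, in_lang E s1 -> in_lang (Star E) s2 -> in_lang (Star E) (s1 ++ s2).

Fixpoint reduced (E : regex) : Prop :=
  match E with
  | Eps => True
  | Empty => False
  | Lit _ => True
  | Cat E1 E2 => reduced E1 /\ reduced E2
  | Union _ _ => False
  | Star E1 => reduced E1
  end.

Fixpoint lits_in (N : nat) (E : regex) : Prop :=
  match E with
  | Eps | Empty => True
  | Lit x => (1 <= x <= N)%nat
  | Cat E1 E2 | Union E1 E2 => lits_in N E1 /\ lits_in N E2
  | Star E1 => lits_in N E1
  end.

Definition word_re (l : list nat) : regex :=
  fold_right (fun x r => Cat (Lit x) r) Eps l.

Definition fapp (a b : nat -> Z) (i : nat) (z : Z) : Z := a i * z + b i.

Fixpoint P (a b : nat -> Z) (s : list nat) (z : Z) : Z :=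
  match s with
  | [] => z
  | e :: s' => P a b s' (fapp a b e z)
  end.

Fixpoint orbit (a b : nat -> Z) (z : Z) (s : list nat) : list Z :=
  match s with
  | [] => [z]
  | e :: s' => z :: orbit a b (fapp a b e z) s'
  end.

Definition V (a b : nat -> Z) (z : Z) (s : list nat) : Prop :=
  forall x, In x (orbit a b z s) -> 0 <= x.

Definition I' (a b : nat -> Z) (z : Z) (E : regex) : Prop :=
  exists s, in_lang E s /\ V a b z s /\ P a b s z > z.

(* Write [exceeds y E K] for "some word s of L(E) is valid from y and
   P_s(y) > K", so that I'(z, E) is [exceeds z E z].  The proof rests on two
   properties of words whose maps all have positive slope:
   - monotonicity: starting higher keeps a word valid and does not decrease
     its gain P_s(y) - y;
   - pumping: a word of alpha that is valid from y and ends above y can be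
     iterated to reach arbitrarily high values, and a fixed word of beta
     appended at a high enough point stays valid and still ends high.
   From these, [exceeds y (alpha* beta) K] holds iff [exceeds y beta K] or
   I'(y, alpha) (lemma [exceeds_star_cat]); the case of a bare alpha* is the
   instance beta = Eps.  A literal prefix l only shifts the start point from
   z to P_l(z) (lemma [exceeds_word_prefix]), and the four parts of the
   theorem follow by combining these facts. *)

From Stdlib Require Import ZArith List Lia.
Import ListNotations.
Open Scope Z_scope.

Section Orbits.

Variables a b : nat -> Z.

Lemma V_nil x : V a b x [] <-> 0 <= x.
Proof.
  unfold V; simpl; split; intros H.
  - apply H; auto.
  - intros y [<- | []]; auto.
Qed.

Lemma V_cons x e s : V a b x (e :: s) <-> 0 <= x /\ V a b (fapp a b e x) s.
Proof.
  unfold V; simpl; split.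
  - intros H; split; [apply H; auto | intros y Hy; apply H; auto].
  - intros [H1 H2] y [<- | Hy]; auto.
Qed.

Lemma V_start x s : V a b x s -> 0 <= x.
Proof. destruct s; [apply V_nil | intros H; apply V_cons in H; tauto]. Qed.

Lemma P_app u v x : P a b (u ++ v) x = P a b v (P a b u x).
Proof. revert x; induction u; simpl; auto. Qed.

Lemma V_app u v x : V a b x (u ++ v) <-> V a b x u /\ V a b (P a b u x) v.
Proof.
  revert x; induction u as [| e u IH]; intros x; simpl.
  - rewrite V_nil; split; [intros H; split; [eapply V_start; eauto | auto] | tauto].
  - rewrite !V_cons, IH; tauto.
Qed.

Lemma P_in_orbit s x : In (P a b s x) (orbit a b x s).
Proof. revert x; induction s; simpl; auto. Qed.

Definition pos_word (s : list nat) : Prop := Forall (fun e => 0 < a e) s.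

Lemma gain_monotone s : pos_word s -> forall x y, x <= y -> V a b x s ->
  V a b y s /\ P a b s y - y >= P a b s x - x.
Proof.
  induction s as [| e s IH]; intros Hpos x y Hxy HV; simpl.
  - rewrite V_nil in *; lia.
  - inversion Hpos as [| ? ? Ha Hpos']; subst.
    rewrite V_cons in *; destruct HV as [H0 HV].
    assert (Hf : fapp a b e x <= fapp a b e y) by (unfold fapp; nia).
    destruct (IH Hpos' _ _ Hf HV) as [HVy Hgain].
    split; [split; [lia | auto] |].
    unfold fapp in *; nia.
Qed.

Lemma orbit_lower_bound t : pos_word t -> exists c, 0 <= c /\
  forall y, c <= y -> forall x, In x (orbit a b y t) -> y - c <= x.
Proof.
  induction t as [| e t IH]; intros Hpos.
  - exists 0; split; [lia |]; simpl; intros y _ x [<- | []]; lia.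
  - inversion Hpos as [| ? ? Ha Hpos']; subst.
    destruct (IH Hpos') as [c [Hc Hbound]].
    exists (c + Z.abs (b e)); split; [lia |].
    simpl; intros y Hy x [<- | Hx]; [lia |].
    assert (Hstep : fapp a b e y >= y + b e) by (unfold fapp; nia).
    specialize (Hbound (fapp a b e y) ltac:(lia) x Hx); lia.
Qed.

End Orbits.

Lemma lits_in_letters N E s :
  in_lang E s -> lits_in N E -> Forall (fun x => (1 <= x <= N)%nat) s.
Proof.
  induction 1; simpl; intros; try tauto; auto; apply Forall_app; tauto.
Qed.

Lemma word_re_lang l s : in_lang (word_re l) s <-> s = l.
Proof.
  split.
  - revert s; induction l; simpl; intros s H.
    + inversion H; auto.
    + inversion H as [| | ? ? s1 s2 Hl Hr | | | |]; subst.
      inversion Hl; subst; simpl; f_equal; auto.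
  - intros ->; induction l; simpl; [constructor |].
    change (a :: l) with ([a] ++ l); constructor; auto; constructor.
Qed.

Lemma cat_word_lang l X s :
  in_lang (Cat (word_re l) X) s <-> exists t, s = l ++ t /\ in_lang X t.
Proof.
  split.
  - intros H; inversion H as [| | ? ? s1 s2 Hl Hr | | | |]; subst.
    apply word_re_lang in Hl; subst; eauto.
  - intros [t [-> H]]; constructor; auto; apply word_re_lang; auto.
Qed.

Lemma cat_eps_lang E s : in_lang (Cat E Eps) s <-> in_lang E s.
Proof.
  split.
  - intros H; inversion H as [| | ? ? s1 s2 H1 H2 | | | |]; subst.
    inversion H2; subst; rewrite app_nil_r; auto.
  - intros H; rewrite <- (app_nil_r s); constructor; auto; constructor.
Qed.

Lemma star_cat_of_right E F s : in_lang F s -> in_lang (Cat (Star E) F) s.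
Proof. intros H; exact (in_cat _ _ [] s (in_star_nil _) H). Qed.

Lemma reduced_nonempty E : reduced E -> exists s, in_lang E s.
Proof.
  induction E; simpl; intros H; try tauto.
  - eexists; constructor.
  - eexists; constructor.
  - destruct H as [H1 H2]; destruct (IHE1 H1) as [s1 ?]; destruct (IHE2 H2) as [s2 ?].
    eexists; constructor; eauto.
  - eexists; apply in_star_nil.
Qed.

Section Exceeds.

Variables a b : nat -> Z.

Definition exceeds (y : Z) (E : regex) (K : Z) : Prop :=
  exists s, in_lang E s /\ V a b y s /\ P a b s y > K.

Lemma I'_exceeds z E : I' a b z E <-> exceeds z E z.
Proof. reflexivity. Qed.

Lemma exceeds_word_prefix y l X K :
  exceeds y (Cat (word_re l) X) K <-> V a b y l /\ exceeds (P a b l y) X K.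
Proof.
  split.
  - intros [s [Hs [HV HP]]]; apply cat_word_lang in Hs; destruct Hs as [t [-> Ht]].
    apply V_app in HV; rewrite P_app in HP.
    split; [tauto | exists t; tauto].
  - intros [Hl [t [Ht [HV HP]]]].
    exists (l ++ t); split; [apply cat_word_lang; eauto |].
    rewrite V_app, P_app; auto.
Qed.

Lemma exceeds_eps y K : exceeds y Eps K <-> 0 <= y /\ y > K.
Proof.
  split.
  - intros [s [Hs [HV HP]]]; inversion Hs; subst; rewrite V_nil in HV; simpl in HP; auto.
  - intros [Hy HK]; exists []; split; [constructor | rewrite V_nil; auto].
Qed.

Lemma exceeds_cat_eps y E K : exceeds y (Cat E Eps) K <-> exceeds y E K.
Proof.
  unfold exceeds; split; intros [s Hs]; exists s; rewrite cat_eps_lang in *; auto.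
Qed.

Variable alpha : regex.
Hypothesis alpha_pos : forall w, in_lang alpha w -> pos_word a w.

(* If a word of alpha*, valid from x <= z, ends above z, then already some
   single factor from alpha lifts z above itself (monotonicity applied at
   the first factor crossing z). *)
Lemma star_first_gain u : in_lang (Star alpha) u ->
  forall x z, x <= z -> V a b x u -> P a b u x > z -> I' a b z alpha.
Proof.
  intros H; remember (Star alpha) as E; revert HeqE.
  induction H as [| | | | | ? | ? s1 s2 H1 _ H2 IH2]; intros HE; try discriminate;
    injection HE; intros ->; intros x z Hxz HV HP.
  - simpl in HP; lia.
  - rewrite P_app in HP; apply V_app in HV; destruct HV as [HV1 HV2].
    destruct (Z_lt_le_dec z (P a b s1 x)) as [Hcross | Hbelow].
    + destruct (gain_monotone a b s1 (alpha_pos _ H1) x z Hxz HV1) as [HVz Hgain].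
      exists s1; repeat split; auto; lia.
    + eapply IH2; eauto.
Qed.

Lemma star_pump y : I' a b y alpha -> forall n : nat,
  exists u, in_lang (Star alpha) u /\ pos_word a u /\ V a b y u /\
            P a b u y >= y + Z.of_nat n.
Proof.
  intros [w [Hw [HV HP]]]; induction n as [| n IH].
  - exists []; repeat split; [constructor | constructor | |].
    + apply V_nil; eapply V_start; eauto.
    + simpl; lia.
  - destruct IH as [u [Hu [Hpos [HVu HPu]]]].
    destruct (gain_monotone a b u Hpos y (P a b w y) ltac:(lia) HVu) as [HVw Hgain].
    exists (w ++ u); repeat split.
    + constructor; auto.
    + apply Forall_app; split; [apply alpha_pos |]; auto.
    + apply V_app; auto.
    + rewrite P_app; lia.
Qed.

Variable beta : regex.
Hypothesis beta_pos : forall w, in_lang beta w -> pos_word a w.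
Hypothesis beta_reduced : reduced beta.

(* Pumping followed by any fixed word of beta exceeds every bound. *)
Lemma exceeds_star_cat_of_gain y K : I' a b y alpha -> exceeds y (Cat (Star alpha) beta) K.
Proof.
  intros Hgain.
  assert (Hy : 0 <= y) by (destruct Hgain as [w [_ [HV _]]]; eapply V_start; eauto).
  destruct (reduced_nonempty _ beta_reduced) as [t Ht].
  destruct (orbit_lower_bound a b t (beta_pos _ Ht)) as [c [Hc Hbound]].
  destruct (star_pump y Hgain (Z.to_nat (c + Z.abs K + 1))) as [u [Hu [_ [HVu HPu]]]].
  rewrite Z2Nat.id in HPu by lia.
  exists (u ++ t); split; [constructor; auto |]; split.
  - apply V_app; split; auto.
    intros x Hx; specialize (Hbound (P a b u y) ltac:(lia) x Hx); lia.
  - rewrite P_app; specialize (Hbound (P a b u y) ltac:(lia) _ (P_in_orbit a b t _)); lia.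
Qed.

(* If the
   alpha*-part does not rise above y, monotonicity lets the beta-part
   start from y instead. *)
Lemma exceeds_star_cat y K :
  exceeds y (Cat (Star alpha) beta) K <-> exceeds y beta K \/ I' a b y alpha.
Proof.
  split.
  - intros [s [Hs [HV HP]]].
    inversion Hs as [| | ? ? u t Hu Ht | | | |]; subst.
    rewrite P_app in HP; apply V_app in HV; destruct HV as [HVu HVt].
    destruct (Z_lt_le_dec y (P a b u y)) as [Hrise | Hnorise].
    + right; eapply star_first_gain; eauto; lia.
    + left; destruct (gain_monotone a b t (beta_pos _ Ht) _ _ Hnorise HVt) as [HVy Hgain].
      exists t; repeat split; auto; lia.
  - intros [[t [Ht Hrest]] | Hgain].
    + exists t; split; auto; apply star_cat_of_right; auto.
    + apply exceeds_star_cat_of_gain; auto.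
Qed.

End Exceeds.

Lemma exceeds_star a b alpha
  (alpha_pos : forall w, in_lang alpha w -> pos_word a w) y K :
  exceeds a b y (Star alpha) K <-> (0 <= y /\ y > K) \/ I' a b y alpha.
Proof.
  rewrite <- exceeds_cat_eps, <- exceeds_eps.
  apply exceeds_star_cat; simpl; auto.
  intros w Hw; inversion Hw; constructor.
Qed.

Lemma lits_in_pos N a E (ha : forall i, (1 <= i <= N)%nat -> 0 < a i) :
  lits_in N E -> forall w, in_lang E w -> pos_word a w.
Proof.
  intros HE w Hw; eapply Forall_impl; [| eapply lits_in_letters; eauto]; auto.
Qed.

Theorem mainTheorem13 (N : nat) (a b : nat -> Z)
  (ha : forall i, (1 <= i <= N)%nat -> 0 < a i)
  (z : Z) (hz : 0 <= z) (alpha beta : regex) (l : list nat)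
  (ralpha : reduced alpha) (rbeta : reduced beta)
  (lalpha : lits_in N alpha) (lbeta : lits_in N beta)
  (hl : Forall (fun x => (1 <= x <= N)%nat) l) :
  (I' a b z (Cat (word_re l) (Cat (Star alpha) beta)) <->
     V a b z l /\ (I' a b z (Cat (word_re l) beta) \/ I' a b (P a b l z) alpha)) /\
  (I' a b z (Cat (word_re l) (Star alpha)) <->
     V a b z l /\ (I' a b z (word_re l) \/ I' a b (P a b l z) alpha)) /\
  (I' a b z (Cat (Star alpha) beta) <-> I' a b z alpha \/ I' a b z beta) /\
  (I' a b z (Star alpha) <-> I' a b z alpha).
Proof.
  pose proof (lits_in_pos N a alpha ha lalpha) as alpha_pos.
  pose proof (lits_in_pos N a beta ha lbeta) as beta_pos.
  pose proof (fun y K => exceeds_star_cat a b alpha alpha_pos beta beta_pos rbeta y K)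
    as Hstar_cat.
  pose proof (exceeds_star a b alpha alpha_pos) as Hstar.
  assert (Hword : I' a b z (word_re l) <-> V a b z l /\ 0 <= P a b l z /\ P a b l z > z).
  { rewrite I'_exceeds, <- exceeds_cat_eps, exceeds_word_prefix, exceeds_eps; tauto. }
  rewrite !I'_exceeds, !exceeds_word_prefix, Hword, Hstar_cat, !Hstar, Hstar_cat.
  unfold I'; fold (exceeds a b).
  intuition lia.
Qed.
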